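(* Consider any FEE problem $(I,O,\succsim_I,\omega)$ and any FTTC mechanism (any rule for choosing the ratio, quota and division matrices at each step). For every step $d\ge 1$ of the procedure such that $O(d)\neq\emptyset$ (so that step $d+1$ is executed and $\overline{O}(d)$ is defined), we have $\overline{O}(d)\subseteq \overline{O}(d-1)$.
   Context: Fractional endowment exchange (FEE) problem: a tuple $(I,O,\succsim_I,\omega)$ where $I$ is a finite set of agents, $O$ a finite set of objects, each agent $i$ has a complete and transitive (possibly non-strict) preference relation $\succsim_i$ over $O$ with asymmetric part $\succ_i$ and symmetric part $\sim_i$, and $\omega=(\omega_{i,o})_{i\in I,o\in O}$ is an endowment matrix with $\omega_{i,o}\in[0,1]$, $\sum_{o\in O}\omega_{i,o}\le 1$ for each $i$, and $q_o=\sum_{i\in I}\omega_{i,o}$ an integer for each $o$. An assignment is a nonnegative matrix $p=(p_{i,o})$ with $\sum_i p_{i,o}\le q_o$ for all $o$ and $\sum_o p_{i,o}\le 1$ for all $i$; $p_i=(p_{i,o})_{o\in O}$ is $i$'s lottery. FTTC (Fractional Top Trading Cycle) on the full preference domain. Initialize $\omega(0)=\omega$, $p(0)=0$, $O(0)=O$. At step $d\ge1$ (with $O(d-1)\ne\emptyset$): (i) Labeling. Put $T_0=O(d-1)$. For $k=1,2,\dots$: let $L_k$ be the set of agents $i\notin L_1\cup\dots\cup L_{k-1}$ for which there exist $o\in T_{k-1}$ and $o'\in O\setminus(T_0\cup\dots\cup T_{k-1})$ with $p_{i,o'}(d-1)>0$ and $o\sim_i o'$; for $i\in L_k$ let $\tilde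 O_i(d-1)$ be the set of all such $o'$ for this $i$, and let $T_k=\bigcup_{i\in L_k}\tilde O_i(d-1)$. Stop at the first $k$ with $L_k=\emptyset$. Set $L(d-1)=\bigcup_k L_k$, $\tilde O(d-1)=\bigcup_{k\ge1}T_k$, $\overline{O}(d-1)=O(d-1)\cup\tilde O(d-1)$, and $\tilde O_i(d-1)=\emptyset$ for $i\notin L(d-1)$. (ii) Pointing. The active agents are $I(d-1)=L(d-1)\cup\{i\in I:\sum_o\omega_{i,o}(d-1)>0\}$. For $i\in I(d-1)$ let $B_i$ be the set of $\succsim_i$-maximal elements of $\overline{O}(d-1)$, let $k_i$ be the least $k\ge0$ with $B_i\cap T_k\ne\emptyset$, and let $A_i(d)=B_i\cap T_{k_i}$. (iii) Trading. The mechanism chooses (possibly depending on the history): a ratio matrix $\lambda(d)=(\lambda_{i,o}(d))_{i\in I(d-1),o\in\overline{O}(d-1)}$, nonnegative, with $\sum_{i\in I(d-1)}\lambda_{i,o}(d)=1$ for each $o\in\overline O(d-1)$, $\lambda_{i,o}(d)>0$ only if $\omega_{i,o}(d-1)>0$ (for $o\in O(d-1)$) and only if $o\in\tilde O_i(d-1)$ (for $o\in\tilde O(d-1)$); a quota matrix $\beta(d)$ on $I(d-1)\times O(d-1)$ with $0\le\beta_{i,o}(d)\le\omega_{i,o}(d-1)$; a division matrix $\gamma(d)$ on $I(d-1)\times\overline O(d-1)$, nonnegative, with $\sum_o\gamma_{i,o}(d)=1$ and $\gamma_{i,o}(d)>0$ only if $o\in A_i(d)$. Let $x^*(d)=(x^*_a(d))_{a\in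 I(d-1)\cup\overline O(d-1)}$ be the maximum (componentwise largest) nonnegative solution of $x_o=\sum_{i\in I(d-1)}\gamma_{i,o}(d)x_i$ for all $o\in\overline O(d-1)$ and $x_i=\sum_{o\in\overline O(d-1)}\lambda_{i,o}(d)x_o$ for all $i\in I(d-1)$, subject to $\lambda_{i,o}(d)x_o\le\beta_{i,o}(d)$ for $o\in O(d-1)$ and $\lambda_{i,o}(d)x_o\le p_{i,o}(d-1)$ for $o\in\tilde O(d-1)$. For $i\in I(d-1)$: $\omega_{i,o}(d)=\omega_{i,o}(d-1)-\lambda_{i,o}(d)x^*_o(d)$ if $o\in O(d-1)$ and $0$ otherwise; $p_{i,o}(d)=p_{i,o}(d-1)-\mathbf 1[o\in\tilde O_i(d-1)]\lambda_{i,o}(d)x^*_o(d)+\gamma_{i,o}(d)x^*_i(d)$ (with $\gamma_{i,o}(d)=0$ for $o\notin\overline O(d-1)$). For $i\notin I(d-1)$, $\omega_i(d)=\omega_i(d-1)$, $p_i(d)=p_i(d-1)$. Let $O(d)=\{o\in O(d-1):\sum_i\omega_{i,o}(d)>0\}$. If $O(d)=\emptyset$ stop and output $p(d)$; otherwise go to step $d+1$. (Standing assumption: the maximum solution exists at each step and the procedure ends after finitely many steps.) An FTTC mechanism is specified by a rule choosing $\lambda(d),\beta(d),\gamma(d)$ at every step. *)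

From HB Require Import structures.
From mathcomp Require Import all_boot all_order all_algebra.
Set Implicit Arguments. Unset Strict Implicit. Unset Printing Implicit Defensive.
Import Order.TTheory GRing.Theory Num.Theory.
Local Open Scope ring_scope.

Section FTTC.
Variables (R : realFieldType) (I O : finType).
(* pref i o o'  <->  o ≿_i o' *)
Variable pref : I -> rel O.

Definition indiff (i : I) (o o' : O) : bool := pref i o o' && pref i o' o.

Definition FEE_problem (omega : I -> O -> R) : Prop :=
  (forall i, total (pref i)) /\ (forall i, transitive (pref i)) /\
  (forall i o, 0 <= omega i o <= 1) /\
  (forall i, \sum_(o : O) omega i o <= 1) /\
  (forall o, exists n : nat, \sum_(i : I) omega i o = n%:R).

(** Labeling at a state (p = p(d-1), Oc = O(d-1)). *)
Section Labeling.
Variables (p : I -> O -> R) (Oc : {set O}).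

Definition tl (Tk cT : {set O}) (i : I) : {set O} :=
  [set o' | (o' \notin cT) && [exists o in Tk, (0 < p i o') && indiff i o o']].

(* labst k = (L_k, T_k, L_1 ∪ ... ∪ L_k, T_0 ∪ ... ∪ T_k) *)
Fixpoint labst (k : nat) : {set I} * {set O} * {set I} * {set O} :=
  match k with
  | 0 => (set0, Oc, set0, Oc)
  | k'.+1 =>
      let: (_, Tk, cL, cT) := labst k' in
      let newL := [set i | (i \notin cL) && (tl Tk cT i != set0)] in
      let newT := \bigcup_(i in newL) tl Tk cT i in
      (newL, newT, cL :|: newL, cT :|: newT)
  end.

Definition Lk (k : nat) : {set I} := (labst k).1.1.1.
Definition Tk (k : nat) : {set O} := (labst k).1.1.2.

(* \tilde O_i as computed at level k (meaningful for i in L_k, k >= 1) *)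
Definition tildeAt (k : nat) (i : I) : {set O} :=
  tl (labst k.-1).1.1.2 (labst k.-1).2 i.

(* L_k = T_k = empty for every k > #|I| (each nonempty L_k consists of fresh
   agents, and L_k = empty forces T_k = L_{k+1} = ... = empty), so the
   unions over all k >= 1 are the unions over 1 <= k <= #|I|.+1. *)
Definition NL := #|I|.+1.
Definition Lset : {set I} := \bigcup_(1 <= k < NL.+1) Lk k.
Definition Otil : {set O} := \bigcup_(1 <= k < NL.+1) Tk k.
Definition Obar : {set O} := Oc :|: Otil.
Definition OtilI (i : I) : {set O} :=
  \bigcup_(1 <= k < NL.+1 | i \in Lk k) tildeAt k i.

Definition inB (i : I) (o : O) : bool :=
  (o \in Obar) && [forall o' in Obar, pref i o o'].
Definition inA (i : I) (o : O) : Prop :=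
  inB i o /\ exists k : nat, o \in Tk k /\
    (forall k' : nat, (k' < k)%N -> ~~ [exists o', inB i o' && (o' \in Tk k')]).
End Labeling.

Definition Iact (om p : I -> O -> R) (Oc : {set O}) : {set I} :=
  Lset p Oc :|: [set i | 0 < \sum_(o : O) om i o].

(** One trading step, from (om, p, Oc) = (omega(d-1), p(d-1), O(d-1))
    to (om', p') = (omega(d), p(d)), with choices lam, beta, gam and
    x* = (xI, xO). Matrices are given on all of I x O; only the entries in
    the domains stated in the procedure are used/constrained. *)
Section Step.
Variables (om p : I -> O -> R) (Oc : {set O}).
Variables (lam beta gam : I -> O -> R).

Definition is_sol (yI : I -> R) (yO : O -> R) : Prop :=
  let Ia := Iact om p Oc in let Ob := Obar p Oc in let Ot := Otil p Oc in
  (forall i, i \in Ia -> 0 <= yI i) /\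
  (forall o, o \in Ob -> 0 <= yO o) /\
  (forall o, o \in Ob -> yO o = \sum_(i in Ia) gam i o * yI i) /\
  (forall i, i \in Ia -> yI i = \sum_(o in Ob) lam i o * yO o) /\
  (forall i o, i \in Ia -> o \in Oc -> lam i o * yO o <= beta i o) /\
  (forall i o, i \in Ia -> o \in Ot -> lam i o * yO o <= p i o).

Definition is_max_sol (xI : I -> R) (xO : O -> R) : Prop :=
  is_sol xI xO /\
  forall yI yO, is_sol yI yO ->
    (forall i, i \in Iact om p Oc -> yI i <= xI i) /\
    (forall o, o \in Obar p Oc -> yO o <= xO o).

Definition fttc_step (xI : I -> R) (xO : O -> R) (om' p' : I -> O -> R) : Prop :=
  let Ia := Iact om p Oc in let Ob := Obar p Oc in let Ot := Otil p Oc in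
  (forall i o, i \in Ia -> o \in Ob -> 0 <= lam i o) /\
  (forall o, o \in Ob -> \sum_(i in Ia) lam i o = 1) /\
  (forall i o, i \in Ia -> o \in Oc -> 0 < lam i o -> 0 < om i o) /\
  (forall i o, i \in Ia -> o \in Ot -> 0 < lam i o -> o \in OtilI p Oc i) /\
  (forall i o, i \in Ia -> o \in Oc -> 0 <= beta i o <= om i o) /\
  (forall i o, i \in Ia -> o \in Ob -> 0 <= gam i o) /\
  (forall i, i \in Ia -> \sum_(o in Ob) gam i o = 1) /\
  (forall i o, i \in Ia -> o \in Ob -> 0 < gam i o -> inA p Oc i o) /\
  is_max_sol xI xO /\
  (forall i o, om' i o =
     if i \in Ia then (if o \in Oc then om i o - lam i o * xO o else 0)
     else om i o) /\
  (forall i o, p' i o =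
     if i \in Ia then
       p i o - (if o \in OtilI p Oc i then lam i o * xO o else 0)
             + (if o \in Ob then gam i o * xI i else 0)
     else p i o).
End Step.

(** A run of an FTTC mechanism on the FEE problem with endowment omega:
    states om d = omega(d), p d = p(d), Os d = O(d), and the choices
    lam d, beta d, gam d, x*(d) = (xI d, xO d) made at step d. *)
Definition executed (Os : nat -> {set O}) (d : nat) : Prop :=
  forall k, (k < d)%N -> Os k != set0.

Definition fttc_run (omega : I -> O -> R)
    (om p : nat -> I -> O -> R) (Os : nat -> {set O})
    (lam beta gam : nat -> I -> O -> R)
    (xI : nat -> I -> R) (xO : nat -> O -> R) : Prop :=
  om 0%N = omega /\ p 0%N = (fun _ _ => 0) /\ Os 0%N = [set: O] /\
  (forall d, (1 <= d)%N -> executed Os d ->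
     fttc_step (om d.-1) (p d.-1) (Os d.-1) (lam d) (beta d) (gam d)
               (xI d) (xO d) (om d) (p d) /\
     Os d = [set o in Os d.-1 | 0 < \sum_(i : I) om d i o]) /\
  (* standing assumption: the procedure ends after finitely many steps *)
  (exists D, Os D = set0).

End FTTC.

(* The proof rests on one invariant of the run: every object an agent holds
   with positive probability is weakly preferred by that agent to every object
   of the current extended set Obar ("holdings dominate", [holdings_dominate]).
   1. Labeling: under this invariant, Obar(p, Oc) is closed under indifference
      towards held objects: if o \in Obar, p i x > 0 and o ~_i x, then
      x \in Obar ([Obar_indiff_closed]).  Either i was already labeled before
      the layer of o -- then its own indifference chain, squeezed between the
      domination inequalities, forces x into the next layer -- or i gets
      labeled right after that layer, with x in its new layer.
   2. One trading step only modifies lotteries on objects of Obar; hence every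
      labeling layer of the new state stays inside the old Obar (induction on
      the layer, using 1.), which gives Obar' \subset Obar ([step_Obar_sub]).
   3. The invariant is preserved by a step ([step_holdings_dominate]): newly
      received objects are top-ranked in Obar \supseteq Obar', and other
      positive holdings were already positive.
   The theorem follows by induction on the steps, starting from p(0) = 0. *)
From HB Require Import structures.
From mathcomp Require Import all_boot all_order all_algebra.
From mathcomp Require Import lra.
Import Order.TTheory GRing.Theory Num.Theory.
Set Implicit Arguments. Unset Strict Implicit.
Local Open Scope ring_scope.

Lemma mem_bigcup_seq (T : finType) (J : Type) (s : seq J) (F : J -> {set T}) x :
  (x \in \big[@setU T/set0]_(k <- s) F k) = has (fun k => x \in F k) s.
Proof.
elim: s => [|a s IH]; first by rewrite big_nil in_set0.
by rewrite big_cons in_setU IH.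
Qed.

Section Labeling.
Variables (R : realFieldType) (I O : finType) (pref : I -> rel O).
Variables (p : I -> O -> R) (Oc : {set O}).

Local Notation L := (Lk pref p Oc).
Local Notation T := (Tk pref p Oc).
Local Notation Obar := (Obar pref p Oc).
Local Notation Otil := (Otil pref p Oc).

Definition cL (k : nat) : {set I} := (labst pref p Oc k).1.2.
Definition cT (k : nat) : {set O} := (labst pref p Oc k).2.

Lemma LkS k :
  L k.+1 = [set i | (i \notin cL k) && (tl pref p (T k) (cT k) i != set0)].
Proof. by rewrite /Lk /cL /Tk /cT /=; case: (labst _ _ _ k) => [[[]]]. Qed.

Lemma TkS k : T k.+1 = \bigcup_(i in L k.+1) tl pref p (T k) (cT k) i.
Proof. by rewrite /Lk /cL /Tk /cT /=; case: (labst _ _ _ k) => [[[]]]. Qed.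

Lemma cLS k : cL k.+1 = cL k :|: L k.+1.
Proof. by rewrite /Lk /cL /Tk /cT /=; case: (labst _ _ _ k) => [[[]]]. Qed.

Lemma cTS k : cT k.+1 = cT k :|: T k.+1.
Proof. by rewrite /Lk /cL /Tk /cT /=; case: (labst _ _ _ k) => [[[]]]. Qed.

Lemma T_sub_cT k : T k \subset cT k.
Proof. by case: k => [|k] //; rewrite cTS subsetUr. Qed.

Lemma OtilP x : reflect (exists2 k, (1 <= k <= NL I)%N & x \in T k) (x \in Otil).
Proof.
rewrite /Otil mem_bigcup_seq.
apply: (iffP hasP) => [] [k kb xk]; exists k => //; move: kb;
  by rewrite mem_index_iota ltnS.
Qed.

Lemma Obar_layer o : o \in Obar -> exists2 j, (j <= NL I)%N & o \in T j.
Proof.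
rewrite /Obar in_setU => /orP[oO|/OtilP[k /andP[_ kN] ok]]; first by exists 0%N.
by exists k.
Qed.

Lemma cT_sub_Obar k : (k <= NL I)%N -> cT k \subset Obar.
Proof.
elim: k => [|k IH] kN; first exact: subsetUl.
rewrite cTS subUset IH ?(ltnW kN) //.
apply/subsetP => x xk; rewrite /Obar in_setU; apply/orP; right.
by apply/OtilP; exists k.+1.
Qed.

Lemma cL_labeled j i : i \in cL j -> exists2 m, (m < j)%N & i \in L m.+1.
Proof.
elim: j => [|j IH]; first by rewrite in_set0.
rewrite cLS in_setU => /orP[/IH[m mj im]|iL].
  by exists m => //; apply: ltnW.
by exists j.
Qed.

(* A nonempty layer T_k needs k distinct labeled agents, so k <= #|I|. *)
Lemma nonempty_layer_card k : T k != set0 -> (k <= #|cL k|)%N.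
Proof.
elim: k => [|k IH] //; rewrite TkS => /set0Pn[x /bigcupP[i iL xtl]].
have Tk0 : T k != set0.
  move: xtl; rewrite inE => /andP[_ /existsP[o /andP[oT _]]].
  by apply/set0Pn; exists o.
apply: leq_ltn_trans (IH Tk0) _; rewrite cLS; apply/proper_card/properP.
split; first exact: subsetUl.
by exists i; [rewrite in_setU iL orbT | move: iL; rewrite LkS inE => /andP[]].
Qed.

Lemma nonempty_layer_lt k : T k != set0 -> (k < NL I)%N.
Proof. by move/nonempty_layer_card/leq_trans; apply; apply: max_card. Qed.

Lemma OtilI_sub_Otil i : OtilI pref p Oc i \subset Otil.
Proof.
apply/subsetP => x; rewrite /OtilI big_mkcond mem_bigcup_seq => /hasP[k].
rewrite mem_index_iota ltnS => kb; case: ifP => [iL xt|]; last by rewrite in_set0.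
apply/OtilP; exists k => //; case: k kb iL xt => // k _ iL xt.
by rewrite TkS; apply/bigcupP; exists i.
Qed.

Lemma OtilI_sub_Obar i : OtilI pref p Oc i \subset Obar.
Proof. exact: subset_trans (OtilI_sub_Otil i) (subsetUr _ _). Qed.

Definition holdings_dominate : Prop :=
  forall i x y, 0 < p i x -> y \in Obar -> pref i x y.

Hypothesis trans : forall i, transitive (pref i).
Hypothesis dom : holdings_dominate.

Lemma Obar_indiff_closed i o x :
  o \in Obar -> 0 < p i x -> indiff pref i o x -> x \in Obar.
Proof.
move=> oOb px ox; apply/negPn/negP => xN.
have [j jN oj] := Obar_layer oOb.
have x_fresh m : (m <= NL I)%N -> x \notin cT m.
  by move=> mN; apply: contra xN; apply/subsetP/cT_sub_Obar.
suff [m [mN iL xtl]] : exists m, [/\ (m < NL I)%N, i \in L m.+1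
                              & x \in tl pref p (T m) (cT m) i].
  apply: (negP xN); rewrite /Obar in_setU; apply/orP; right.
  by apply/OtilP; exists m.+1; rewrite // TkS; apply/bigcupP; exists i.
case: (boolP (i \in cL j)) => [/cL_labeled[m mj iL]|niL].
- have mN : (m <= NL I)%N by apply: leq_trans (ltnW mj) jN.
  move: (iL); rewrite LkS inE => /andP[_ /set0Pn[o1]].
  rewrite inE => /andP[_ /existsP[o2 /andP[o2m /andP[po1 o2o1]]]].
  have o2Ob : o2 \in Obar by apply/(subsetP (cT_sub_Obar mN))/(subsetP (T_sub_cT m)).
  (* o2 ~ o1, o1 >= o (held), o ~ x, x >= o2 (held) : hence o2 ~ x *)
  move: ox o2o1 => /andP[o_x x_o] /andP[o2_o1 _].
  have o2_x : pref i o2 x := trans (trans o2_o1 (dom po1 oOb)) o_x.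
  exists m; split => //; first exact: leq_trans mj jN.
  by rewrite inE x_fresh //=; apply/existsP; exists o2; rewrite o2m px /indiff o2_x dom.
- have xtl : x \in tl pref p (T j) (cT j) i.
    by rewrite inE x_fresh //=; apply/existsP; exists o; rewrite oj px.
  have iL : i \in L j.+1 by rewrite LkS inE niL; apply/set0Pn; exists x.
  exists j; split => //; apply/ltnW/nonempty_layer_lt/set0Pn; exists x.
  by rewrite TkS; apply/bigcupP; exists i.
Qed.
End Labeling.

Section Step.
Variables (R : realFieldType) (I O : finType) (pref : I -> rel O).
Variables (om p om' p' : I -> O -> R) (Oc Oc' : {set O}).
Variables (lam beta gam : I -> O -> R) (xI : I -> R) (xO : O -> R).
Hypothesis trans : forall i, transitive (pref i).
Hypothesis dom : holdings_dominate pref p Oc.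
Hypothesis step : fttc_step pref om p Oc lam beta gam xI xO om' p'.
Hypothesis Oc'_sub : Oc' \subset Oc.

Lemma step_outside_Obar i o : o \notin Obar pref p Oc -> p' i o = p i o.
Proof.
have [_ [_ [_ [_ [_ [_ [_ [_ [_ [_ Up]]]]]]]]]] := step.
move=> oN; rewrite Up; case: ifP => // _.
have oNI : o \notin OtilI pref p Oc i by apply: contra oN; apply/subsetP/OtilI_sub_Obar.
by rewrite (negbTE oNI) (negbTE oN) subr0 addr0.
Qed.

Lemma step_layer_sub k : Tk pref p' Oc' k \subset Obar pref p Oc.
Proof.
elim: k => [|k IH]; first exact: subset_trans Oc'_sub (subsetUl _ _).
rewrite TkS; apply/subsetP => x /bigcupP[i _].
rewrite inE => /andP[_ /existsP[o /andP[ok /andP[px ox]]]].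
case: (boolP (x \in Obar pref p Oc)) => // xN.
rewrite step_outside_Obar // in px.
by rewrite (Obar_indiff_closed trans dom (subsetP IH o ok) px ox) in xN.
Qed.

Lemma step_Obar_sub : Obar pref p' Oc' \subset Obar pref p Oc.
Proof.
apply/subsetP => x; rewrite {1}/Obar in_setU => /orP[xO'|/OtilP[k _ xk]].
  by rewrite /Obar in_setU (subsetP Oc'_sub x xO').
exact: (subsetP (step_layer_sub k)).
Qed.

Lemma step_holdings_dominate : holdings_dominate pref p' Oc'.
Proof.
move=> i x y px' /(subsetP step_Obar_sub) yOb.
case: (boolP (x \in Obar pref p Oc)) => xOb; last first.
  by apply: dom yOb; rewrite -(step_outside_Obar i xOb).
have [lam0 [_ [_ [_ [_ [gam0 [_ [gamA [[[xI0 [xO0 _]] _] [_ Up]]]]]]]]]] := step.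
move: px'; rewrite Up xOb; case: ifP => iIa px'; last exact: dom px' yOb.
(* p' i x = p i x - A + gam i x * xI i, where A >= 0 is what i gives away *)
move: px'; set A := (if _ then _ else _).
have A0 : 0 <= A.
  by rewrite /A; case: ifP => // _; apply: mulr_ge0; [apply: lam0 | apply: xO0].
case: (ltrP 0 (gam i x * xI i)) => [gx _ | gx px']; last by apply: dom yOb; lra.
(* i receives a share of x, hence x is one of its top choices in Obar *)
have gpos : 0 < gam i x.
  rewrite lt_def gam0 // andbT; apply: contraTneq gx => ->; by rewrite mul0r ltxx.
by have [/andP[_ /forall_inP top] _] := gamA i x iIa xOb gpos; apply: top.
Qed.
End Step.

Theorem lemma1 (R : realFieldType) (I O : finType) (pref : I -> rel O)
    (omega : I -> O -> R)
    (om p : nat -> I -> O -> R) (Os : nat -> {set O})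
    (lam beta gam : nat -> I -> O -> R)
    (xI : nat -> I -> R) (xO : nat -> O -> R) :
  FEE_problem pref omega ->
  fttc_run pref omega om p Os lam beta gam xI xO ->
  forall d : nat, (1 <= d)%N -> executed Os d -> Os d != set0 ->
    Obar pref (p d) (Os d) \subset Obar pref (p d.-1) (Os d.-1).
Proof.
move=> [_ [trans _]] [_ [p0 [_ [run _]]]].
have exec_pred s : executed Os s.+1 -> executed Os s.
  by move=> ex k ks; apply: ex; apply: ltnW.
have Os_sub s : executed Os s.+1 -> Os s.+1 \subset Os s.
  move=> ex; have [_ ->] := run s.+1 isT ex.
  by apply/subsetP => z; rewrite inE => /andP[].
have dom s : executed Os s -> holdings_dominate pref (p s) (Os s).
  elim: s => [|s IH] ex; first by move=> i x y; rewrite p0 ltxx.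
  have [step _] := run s.+1 isT ex.
  exact: (step_holdings_dominate trans (IH (exec_pred s ex)) step (Os_sub s ex)).
case=> // d _ ex _; have [step _] := run d.+1 isT ex.
exact: (step_Obar_sub trans (dom d (exec_pred d ex)) step (Os_sub d ex)).
Qed.
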